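(* Let $A=\begin{pmatrix}2&-4\\-1&2\end{pmatrix}$ and $\mathfrak g=\mathfrak g(A)$ the corresponding affine Kac–Moody algebra. Then (1) every $\pi$-system $\Sigma\subseteq\Delta^+_{\mathrm{re}}$ with $|\Sigma|>1$ is of the form $\{\beta_1^j,\beta_2^k\}$ for some $j,k\in\mathbb Z_+$; conversely, $\{\beta_1^j,\beta_2^k\}$ is a $\pi$-system iff either $j\not\equiv1\pmod2$ or $k\not\equiv j+3\pmod4$; (2) every $\pi$-system $\Sigma\subseteq\Delta_{\mathrm{re}}$ with $|\Sigma|>1$ is either as in (1) or of the form $\{\beta_i^j,-\beta_i^k\}$ for some $j,k\in\mathbb Z_+$, $i\in\{1,2\}$; conversely, $\{\beta_i^j,-\beta_i^k\}$ is a $\pi$-system iff at least one of $j\not\equiv i\pmod2$, $k\not\equiv i\pmod2$, $j\equiv k\pmod4$ holds.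
   Context: $\mathfrak g(A)$ has simple roots $\alpha_1,\alpha_2$, root system $\Delta$, real roots $\Delta_{\mathrm{re}}$, positive real roots $\Delta^+_{\mathrm{re}}$. $\mathbb Z_+=\{0,1,2,\dots\}$. Define $c_0=d_0=0$, $c_1=d_1=1$, $c_{k+2}+c_k=4d_{k+1}$, $d_{k+2}+d_k=c_{k+1}$, and $\beta_1^j=c_j\alpha_1+d_{j+1}\alpha_2$, $\beta_2^j=c_{j+1}\alpha_1+d_j\alpha_2$ ($j\in\mathbb Z_+$); explicitly, with $\delta=2\alpha_1+\alpha_2$ and $\epsilon=\alpha_1$, $\beta_1^{2k}=-2\epsilon+(2k+1)\delta$, $\beta_1^{2k+1}=-\epsilon+(k+1)\delta$, $\beta_2^{2k}=\epsilon+k\delta$, $\beta_2^{2k+1}=2\epsilon+(2k+1)\delta$, and these are all the positive real roots. A subset $\Sigma\subseteq\Delta_{\mathrm{re}}$ is a $\pi$-system if $\alpha-\beta\notin\Delta$ for all $\alpha,\beta\in\Sigma$. *)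

(* Roots of g(A), A = [[2,-4],[-1,2]], are encoded by their
   coordinates (a,b) in the root lattice: (a,b) stands for a*alpha1 + b*alpha2. *)
From Stdlib Require Import ZArith Arith Lia.
Open Scope Z_scope.

Definition rt := (Z * Z)%type.

Definition alpha1 : rt := (1, 0).
Definition alpha2 : rt := (0, 1).

Definition rt_add (x y : rt) : rt := (fst x + fst y, snd x + snd y).
Definition rt_opp (x : rt) : rt := (- fst x, - snd x).
Definition rt_sub (x y : rt) : rt := rt_add x (rt_opp y).

(* Cartan matrix A = (a_ij), a_11 = 2, a_12 = -4, a_21 = -1, a_22 = 2.
   <alpha_j, alpha_i^v> = a_ij. *)
Definition A (i j : nat) : Z :=
  match i, j with
  | 1%nat, 1%nat => 2 | 1%nat, 2%nat => -4
  | 2%nat, 1%nat => -1 | 2%nat, 2%nat => 2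
  | _, _ => 0
  end.

Definition pairing (x : rt) (i : nat) : Z := fst x * A i 1 + snd x * A i 2.

Definition refl1 (x : rt) : rt := (fst x - pairing x 1, snd x).
Definition refl2 (x : rt) : rt := (fst x, snd x - pairing x 2).

Inductive W_orbit (S : rt -> Prop) : rt -> Prop :=
| Wo_base x : S x -> W_orbit S x
| Wo_s1 x : W_orbit S x -> W_orbit S (refl1 x)
| Wo_s2 x : W_orbit S x -> W_orbit S (refl2 x).

(* Real roots: the Weyl group orbit of the simple roots (Kac, Prop. 5.1). *)
Definition real_root (x : rt) : Prop :=
  W_orbit (fun y => y = alpha1 \/ y = alpha2) x.

(* Kac's fundamental set K: nonzero alpha in Q_+ with connected support and
   <alpha, alpha_i^v> <= 0 for all i.  The Dynkin diagram of A has an edge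
   between 1 and 2, so every nonempty support is connected. *)
Definition fundamental_set (x : rt) : Prop :=
  0 <= fst x /\ 0 <= snd x /\ x <> (0, 0) /\
  pairing x 1 <= 0 /\ pairing x 2 <= 0.

(* Imaginary roots: Delta_im = W.K  union  -W.K (Kac, Thm 5.4). *)
Definition imag_root (x : rt) : Prop :=
  W_orbit fundamental_set x \/ W_orbit fundamental_set (rt_opp x).

Definition root (x : rt) : Prop := real_root x \/ imag_root x.

Definition pos_rt (x : rt) : Prop := 0 <= fst x /\ 0 <= snd x.

(* Sequences c_k, d_k: c_0 = d_0 = 0, c_1 = d_1 = 1,
   c_{k+2} + c_k = 4 d_{k+1}, d_{k+2} + d_k = c_{k+1}.
   cd k = (c_k, d_k, c_{k+1}, d_{k+1}). *)
Fixpoint cd (k : nat) : Z * Z * Z * Z :=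
  match k with
  | O => (0, 0, 1, 1)
  | S k' => let '(c0, d0, c1, d1) := cd k' in (c1, d1, 4 * d1 - c0, c1 - d0)
  end.

Definition c (k : nat) : Z := let '(c0, _, _, _) := cd k in c0.
Definition d (k : nat) : Z := let '(_, d0, _, _) := cd k in d0.

Definition beta1 (j : nat) : rt := (c j, d (S j)).
Definition beta2 (j : nat) : rt := (c (S j), d j).
Definition beta (i : nat) (j : nat) : rt := if Nat.eqb i 1 then beta1 j else beta2 j.

Definition pi_system (Sigma : rt -> Prop) : Prop :=
  forall x y, Sigma x -> Sigma y -> ~ root (rt_sub x y).

Definition card_gt1 (Sigma : rt -> Prop) : Prop :=
  exists x y, Sigma x /\ Sigma y /\ x <> y.

Definition pair_set (x y : rt) : rt -> Prop := fun z => z = x \/ z = y.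

Definition set_eq (S T : rt -> Prop) : Prop := forall z, S z <-> T z.

From Stdlib Require Import ZArith Arith Lia ZifyNat.

(* Write a root x = a alpha1 + b alpha2 as x = e eps + n delta with eps = alpha1,
   delta = 2 alpha1 + alpha2, so e = a - 2b and n = b.  Both reflections negate e,
   and s1 s2 translates x by e delta, so the real roots are exactly the points with
   |e| = 1, or |e| = 2 and n odd; the imaginary roots are those with e = 0, n <> 0.
   If two distinct real roots have e of the same sign, their difference has
   |e| <= 1 and is nonzero, hence is a root.  So a pi-system of real roots consists
   of at most one root with e < 0 and one with e > 0.  The positive real roots with
   e < 0 are the beta_1^j and those with e > 0 the beta_2^k; the negative ones are
   their opposites.  What remains is a parity computation on the difference. *)

Ltac zlia := zify; Z.to_euclidean_division_equations; lia.

Definition delta : rt := (2, 1).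

Definition rt_scale (z : Z) (x : rt) : rt := (z * fst x, z * snd x).

Definition eps_coeff (x : rt) : Z := fst x - 2 * snd x.

Definition real_coeffs (x : rt) : Prop :=
  eps_coeff x = 1 \/ eps_coeff x = -1 \/
  ((eps_coeff x = 2 \/ eps_coeff x = -2) /\ snd x mod 2 = 1).

Ltac rt_arith :=
  repeat match goal with x : rt |- _ => destruct x end;
  unfold real_coeffs, eps_coeff, rt_scale, delta, alpha1, alpha2, rt_sub, rt_add,
    rt_opp, refl1, refl2, pairing, A in *;
  cbn [fst snd] in *;
  try match goal with |- (_, _) = (_, _) => f_equal end; zlia.

Lemma refl1_refl2 x : refl1 (refl2 x) = rt_add x (rt_scale (eps_coeff x) delta).
Proof. rt_arith. Qed.

Lemma refl2_refl1 x : refl2 (refl1 x) = rt_add x (rt_scale (- eps_coeff x) delta).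
Proof. rt_arith. Qed.

Lemma eps_coeff_add_delta x z : eps_coeff (rt_add x (rt_scale z delta)) = eps_coeff x.
Proof. rt_arith. Qed.

Lemma real_root_translate x z :
  real_root x -> real_root (rt_add x (rt_scale (z * eps_coeff x) delta)).
Proof.
  intros Hx; induction z as [|z IH|z IH] using Z.peano_ind.
  - replace (rt_add _ _) with x by rt_arith; exact Hx.
  - replace (rt_add _ _)
      with (refl1 (refl2 (rt_add x (rt_scale (z * eps_coeff x) delta)))).
    + now apply Wo_s1, Wo_s2.
    + rewrite refl1_refl2, eps_coeff_add_delta; rt_arith.
  - replace (rt_add _ _)
      with (refl2 (refl1 (rt_add x (rt_scale (z * eps_coeff x) delta)))).
    + now apply Wo_s2, Wo_s1.
    + rewrite refl2_refl1, eps_coeff_add_delta; rt_arith.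
Qed.

Lemma real_root_iff x : real_root x <-> real_coeffs x.
Proof.
  split.
  - induction 1 as [x [-> | ->] | x _ IH | x _ IH]; rt_arith.
  - assert (H1 : real_root alpha1) by (apply Wo_base; now left).
    assert (H2 : real_root alpha2) by (apply Wo_base; now right).
    (* alpha1 = eps and alpha2 = delta - 2 eps *)
    intros [He | [He | [[He | He] Hn]]].
    + replace x with (rt_add alpha1 (rt_scale (snd x * eps_coeff alpha1) delta))
        by rt_arith.
      now apply real_root_translate.
    + replace x with (refl1 (rt_add alpha1 (rt_scale (snd x * eps_coeff alpha1) delta)))
        by rt_arith.
      now apply Wo_s1, real_root_translate.
    + replace x with (refl1 (rt_add alpha2
                        (rt_scale ((1 - snd x) / 2 * eps_coeff alpha2) delta)))
        by rt_arith.
      now apply Wo_s1, real_root_translate.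
    + replace x with (rt_add alpha2 (rt_scale ((1 - snd x) / 2 * eps_coeff alpha2) delta))
        by rt_arith.
      now apply real_root_translate.
Qed.

Lemma fundamental_orbit_coeffs x :
  W_orbit fundamental_set x -> eps_coeff x = 0 /\ 0 < snd x.
Proof.
  induction 1 as [[a b] (Ha & Hb & H0 & H1 & H2) | x _ IH | x _ IH]; [| rt_arith ..].
  assert (b <> 0) by (intros ->; apply H0; f_equal; unfold pairing, A in *; cbn in *; lia).
  rt_arith.
Qed.

Lemma imag_root_iff x : imag_root x <-> eps_coeff x = 0 /\ snd x <> 0.
Proof.
  split.
  - intros [H | H]; apply fundamental_orbit_coeffs in H; rt_arith.
  - intros [He Hn]; destruct (Z.lt_ge_cases 0 (snd x)).
    + left; apply Wo_base; unfold fundamental_set.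
      repeat split; try (intros E; subst x); rt_arith.
    + right; apply Wo_base; unfold fundamental_set.
      repeat split; try (intros E; unfold rt_opp in E; injection E); rt_arith.
Qed.

Lemma root_iff x : root x <-> real_coeffs x \/ (eps_coeff x = 0 /\ snd x <> 0).
Proof. unfold root; now rewrite real_root_iff, imag_root_iff. Qed.

Lemma pi_system_pair_iff u v : pi_system (pair_set u v) <-> ~ root (rt_sub u v).
Proof.
  split.
  - intros H; apply H; [now left | now right].
  - intros H x y [-> | ->] [-> | ->]; rewrite !root_iff in *; rt_arith.
Qed.

Lemma set_eq_pair_set_comm Sigma x y :
  set_eq Sigma (pair_set x y) -> set_eq Sigma (pair_set y x).
Proof. unfold set_eq, pair_set; intros H z; rewrite H; tauto. Qed.

Lemma rt_eq_dec (x y : rt) : {x = y} + {x <> y}.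
Proof. decide equality; apply Z.eq_dec. Qed.

Lemma real_roots_opposite_eps x y :
  real_root x -> real_root y -> x <> y -> ~ root (rt_sub x y) ->
  eps_coeff x * eps_coeff y < 0.
Proof.
  rewrite root_iff, !real_root_iff; destruct x as [a b], y as [a' b'].
  intros Hx Hy Hxy.
  assert (a <> a' \/ b <> b')
    by (destruct (Z.eq_dec a a'), (Z.eq_dec b b'); subst; auto).
  rt_arith.
Qed.

Lemma real_pi_system_pair (Sigma : rt -> Prop) :
  (forall x, Sigma x -> real_root x) -> pi_system Sigma -> card_gt1 Sigma ->
  exists x y, eps_coeff x < 0 < eps_coeff y /\ set_eq Sigma (pair_set x y).
Proof.
  intros Hreal Hpi (x & y & Hx & Hy & Hxy).
  assert (Hopp : forall u v, Sigma u -> Sigma v -> u <> v ->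
                   eps_coeff u * eps_coeff v < 0)
    by (intros u v Hu Hv Huv; apply real_roots_opposite_eps; auto).
  assert (Heq : set_eq Sigma (pair_set x y)).
  { intros z; split; [| now intros [-> | ->]].
    intros Hz; destruct (rt_eq_dec z x) as [| Hzx]; [now left |].
    destruct (rt_eq_dec z y) as [| Hzy]; [now right |].
    pose proof (Hopp x y Hx Hy Hxy); pose proof (Hopp z x Hz Hx Hzx);
      pose proof (Hopp z y Hz Hy Hzy).
    (* the three products multiply to a square *)
    exfalso; nia. }
  destruct (proj1 (Z.lt_mul_0 _ _) (Hopp x y Hx Hy Hxy)) as [Hs | Hs].
  - exists x, y; now split.
  - exists y, x; split; [now split | now apply set_eq_pair_set_comm].
Qed.

Lemma cd_even k :
  cd (2 * k) = (4 * Z.of_nat k, Z.of_nat k, 2 * Z.of_nat k + 1, 2 * Z.of_nat k + 1).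
Proof.
  induction k as [| k IH]; [reflexivity |].
  replace (2 * S k)%nat with (S (S (2 * k))) by lia.
  cbn [cd]; rewrite IH, Nat2Z.inj_succ; f_equal; [f_equal; [f_equal |] |]; lia.
Qed.

Lemma beta1_even q : beta1 (2 * q) = (4 * Z.of_nat q, 2 * Z.of_nat q + 1).
Proof. unfold beta1, c, d; cbn [cd]; now rewrite cd_even. Qed.

Lemma beta1_odd q : beta1 (2 * q + 1) = (2 * Z.of_nat q + 1, Z.of_nat q + 1).
Proof.
  unfold beta1, c, d.
  replace (S (2 * q + 1)) with (2 * S q)%nat by lia.
  replace (2 * q + 1)%nat with (S (2 * q)) by lia.
  cbn [cd]; rewrite !cd_even; f_equal; lia.
Qed.

Lemma beta2_even q : beta2 (2 * q) = (2 * Z.of_nat q + 1, Z.of_nat q).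
Proof. unfold beta2, c, d; cbn [cd]; now rewrite cd_even. Qed.

Lemma beta2_odd q : beta2 (2 * q + 1) = (4 * Z.of_nat q + 4, 2 * Z.of_nat q + 1).
Proof.
  unfold beta2, c, d.
  replace (S (2 * q + 1)) with (2 * S q)%nat by lia.
  replace (2 * q + 1)%nat with (S (2 * q)) by lia.
  cbn [cd]; rewrite !cd_even; f_equal; lia.
Qed.

Ltac case_parity j :=
  let q := fresh "q" in
  destruct (Nat.Even_or_Odd j) as [[q ->] | [q ->]];
  rewrite ?beta1_even, ?beta1_odd, ?beta2_even, ?beta2_odd.

Lemma real_root_neg_eps x : real_root x -> eps_coeff x < 0 ->
  (exists j, x = beta1 j) \/ (exists j, x = rt_opp (beta2 j)).
Proof.
  rewrite real_root_iff; destruct x as [a b]; unfold real_coeffs, eps_coeff; cbn [fst snd].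
  intros Hcoeffs Hs.
  assert (Ha : a = 2 * b - 1 \/ (a = 2 * b - 2 /\ b mod 2 = 1)) by lia.
  destruct Ha as [-> | [-> Hn]]; destruct (Z.lt_ge_cases 0 b).
  - left; exists (2 * Z.to_nat (b - 1) + 1)%nat; rewrite beta1_odd; f_equal; lia.
  - right; exists (2 * Z.to_nat (- b))%nat; rewrite beta2_even; rt_arith.
  - left; exists (2 * Z.to_nat (b / 2))%nat; rewrite beta1_even; f_equal; zlia.
  - right; exists (2 * Z.to_nat ((- b - 1) / 2) + 1)%nat; rewrite beta2_odd; rt_arith.
Qed.

Lemma real_root_pos_eps x : real_root x -> 0 < eps_coeff x ->
  (exists j, x = beta2 j) \/ (exists j, x = rt_opp (beta1 j)).
Proof.
  rewrite real_root_iff; destruct x as [a b]; unfold real_coeffs, eps_coeff; cbn [fst snd].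
  intros Hcoeffs Hs.
  assert (Ha : a = 2 * b + 1 \/ (a = 2 * b + 2 /\ b mod 2 = 1)) by lia.
  destruct Ha as [-> | [-> Hn]]; destruct (Z.le_gt_cases 0 b).
  - left; exists (2 * Z.to_nat b)%nat; rewrite beta2_even; f_equal; lia.
  - right; exists (2 * Z.to_nat (- b - 1) + 1)%nat; rewrite beta1_odd; rt_arith.
  - left; exists (2 * Z.to_nat (b / 2) + 1)%nat; rewrite beta2_odd; f_equal; zlia.
  - right; exists (2 * Z.to_nat ((- b - 1) / 2))%nat; rewrite beta1_even; rt_arith.
Qed.

Lemma not_pos_rt_opp_beta1 j : ~ pos_rt (rt_opp (beta1 j)).
Proof. unfold pos_rt; case_parity j; rt_arith. Qed.

Lemma not_pos_rt_opp_beta2 j : ~ pos_rt (rt_opp (beta2 j)).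
Proof. unfold pos_rt; case_parity j; rt_arith. Qed.

Lemma pos_real_root_neg_eps x : real_root x -> pos_rt x -> eps_coeff x < 0 ->
  exists j, x = beta1 j.
Proof.
  intros Hx Hpos Hs; destruct (real_root_neg_eps x Hx Hs) as [| [j ->]]; [easy |].
  now destruct (not_pos_rt_opp_beta2 j).
Qed.

Lemma pos_real_root_pos_eps x : real_root x -> pos_rt x -> 0 < eps_coeff x ->
  exists j, x = beta2 j.
Proof.
  intros Hx Hpos Hs; destruct (real_root_pos_eps x Hx Hs) as [| [j ->]]; [easy |].
  now destruct (not_pos_rt_opp_beta1 j).
Qed.

Theorem theorem5p1 :
  (* (1) *)
  (forall Sigma : rt -> Prop,
      (forall x, Sigma x -> real_root x /\ pos_rt x) ->
      pi_system Sigma -> card_gt1 Sigma ->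
      exists j k : nat, set_eq Sigma (pair_set (beta1 j) (beta2 k))) /\
  (forall j k : nat,
      pi_system (pair_set (beta1 j) (beta2 k)) <->
      (Nat.modulo j 2 <> 1%nat \/ Nat.modulo k 4 <> Nat.modulo (j + 3) 4)) /\
  (* (2) *)
  (forall Sigma : rt -> Prop,
      (forall x, Sigma x -> real_root x) ->
      pi_system Sigma -> card_gt1 Sigma ->
      (exists j k : nat,
          set_eq Sigma (pair_set (beta1 j) (beta2 k)) \/
          set_eq Sigma (pair_set (rt_opp (beta1 j)) (rt_opp (beta2 k)))) \/
      (exists (i j k : nat), (i = 1%nat \/ i = 2%nat) /\
          set_eq Sigma (pair_set (beta i j) (rt_opp (beta i k))))) /\
  (forall i j k : nat, (i = 1%nat \/ i = 2%nat) ->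
      (pi_system (pair_set (beta i j) (rt_opp (beta i k))) <->
       (Nat.modulo j 2 <> Nat.modulo i 2 \/ Nat.modulo k 2 <> Nat.modulo i 2 \/
        Nat.modulo j 4 = Nat.modulo k 4))).
Proof.
  split; [| split; [| split]].
  - intros Sigma HSigma Hpi Hcard.
    destruct (real_pi_system_pair Sigma (fun x Hx => proj1 (HSigma x Hx)) Hpi Hcard)
      as (x & y & [Hx Hy] & Heq).
    destruct (HSigma x) as [Rx Px]; [apply Heq; now left |].
    destruct (HSigma y) as [Ry Py]; [apply Heq; now right |].
    destruct (pos_real_root_neg_eps x Rx Px Hx) as [j ->].
    destruct (pos_real_root_pos_eps y Ry Py Hy) as [k ->].
    now exists j, k.
  - intros j k; rewrite pi_system_pair_iff, root_iff.
    case_parity j; case_parity k; split; rt_arith.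
  - intros Sigma HSigma Hpi Hcard.
    destruct (real_pi_system_pair Sigma HSigma Hpi Hcard) as (x & y & [Hx Hy] & Heq).
    assert (Rx : real_root x) by (apply HSigma, Heq; now left).
    assert (Ry : real_root y) by (apply HSigma, Heq; now right).
    destruct (real_root_neg_eps x Rx Hx) as [[j ->] | [j ->]],
      (real_root_pos_eps y Ry Hy) as [[k ->] | [k ->]].
    + left; exists j, k; now left.
    + right; exists 1%nat, j, k; now split; [left |].
    + right; exists 2%nat, k, j; split; [now right | now apply set_eq_pair_set_comm].
    + left; exists k, j; right; now apply set_eq_pair_set_comm.
  - intros i j k [-> | ->]; cbn [beta Nat.eqb]; rewrite pi_system_pair_iff, root_iff;
      case_parity j; case_parity k; split; rt_arith.
Qed.
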